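(* If $C\subseteq\mathbb{R}$ is infinite and $|\mathbb{R}\setminus C|=\mathfrak{c}$, then there is a two-point selection $f$ on $\mathbb{R}$ such that $C$ is neither open nor closed in the topology $\tau_f$.
   Context: $\mathfrak{c}=|\mathbb{R}|$. A two-point selection on $\mathbb{R}$ is a function $f$ from the set of two-element subsets of $\mathbb{R}$ to $\mathbb{R}$ with $f(F)\in F$. Write $r<_f s$ if $f(\{r,s\})=r$ ($r\ne s$), $(\leftarrow,r)_f=\{x: x<_f r\}$, $(r,\rightarrow)_f=\{x: r<_f x\}$. The topology $\tau_f$ on $\mathbb{R}$ is generated (as a subbase) by all sets $(\leftarrow,r)_f$, $(r,\rightarrow)_f$, $r\in\mathbb{R}$. *)

From Stdlib Require Import Reals.
Open Scope R_scope.

(* A two-point selection on R: a function on two-element subsets {r,s}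
   (r <> s), represented as a symmetric binary function on pairs of
   distinct reals choosing one of its two arguments. Values on the
   diagonal are irrelevant. *)
Definition two_point_selection (f : R -> R -> R) : Prop :=
  forall r s, r <> s -> f r s = f s r /\ (f r s = r \/ f r s = s).

Definition sel_lt (f : R -> R -> R) (r s : R) : Prop := r <> s /\ f r s = r.

Definition sel_left_ray (f : R -> R -> R) (r : R) : R -> Prop :=
  fun x => sel_lt f x r.
Definition sel_right_ray (f : R -> R -> R) (r : R) : R -> Prop :=
  fun x => sel_lt f r x.

Definition subbase_f (f : R -> R -> R) (U : R -> Prop) : Prop :=
  exists r, (forall x, U x <-> sel_left_ray f r x) \/
            (forall x, U x <-> sel_right_ray f r x).

Inductive generated_open (S : (R -> Prop) -> Prop) : (R -> Prop) -> Prop :=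
  | go_sub : forall U, S U -> generated_open S U
  | go_full : generated_open S (fun _ => True)
  | go_inter : forall U V, generated_open S U -> generated_open S V ->
      generated_open S (fun x => U x /\ V x)
  | go_union : forall (F : (R -> Prop) -> Prop),
      (forall U, F U -> generated_open S U) ->
      generated_open S (fun x => exists U, F U /\ U x)
  | go_ext : forall U V, generated_open S U -> (forall x, U x <-> V x) ->
      generated_open S V.

Definition tau_open (f : R -> R -> R) (U : R -> Prop) : Prop :=
  generated_open (subbase_f f) U.

Definition tau_closed (f : R -> R -> R) (U : R -> Prop) : Prop :=
  tau_open f (fun x => ~ U x).

Definition infinite_set (C : R -> Prop) : Prop :=
  exists g : nat -> R, (forall n, C (g n)) /\ (forall n m, g n = g m -> n = m).

Definition has_card_continuum (A : R -> Prop) : Prop :=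
  exists g : R -> R, (forall x, A (g x)) /\
    (forall x y, g x = g y -> x = y) /\ (forall a, A a -> exists x, g x = a).

(* Rank the reals by a function [phi : R -> R] and let the selection pick the
   point of smaller rank, breaking ties by the usual order.  If [phi p = a] is
   attained only at [p] and [phi (q n)] decreases to [a] from above, then
   [q n] converges to [p] in the resulting topology, because every subbasic
   ray around [p] is cut out by a strict inequality on ranks.  Choosing [phi]
   so that points outside [C] converge to a point of [C] and points of [C]
   converge to a point outside [C] shows that neither [C] nor its complement
   is open. *)

From Stdlib Require Import Reals Lra Lia ClassicalEpsilon.
Open Scope R_scope.

Definition eventually (P : nat -> Prop) : Prop :=
  exists N, forall n, (N <= n)%nat -> P n.

Definition subbase_limit (S : (R -> Prop) -> Prop) (q : nat -> R) (p : R) :=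
  forall U, S U -> U p -> eventually (fun n => U (q n)).

Lemma generated_open_limit S q p :
  subbase_limit S q p ->
  forall U, generated_open S U -> U p -> eventually (fun n => U (q n)).
Proof.
  intros Hlim U HU; induction HU as [U HS| |U V _ IHU _ IHV|F _ IH|U V _ IH Hext].
  - now apply Hlim.
  - intros _; now exists O.
  - intros [Up Vp].
    destruct (IHU Up) as [N1 HN1], (IHV Vp) as [N2 HN2].
    exists (Nat.max N1 N2); intros n Hn; split; [apply HN1 | apply HN2]; lia.
  - intros [V [FV Vp]].
    destruct (IH V FV Vp) as [N HN].
    exists N; intros n Hn; exists V; auto.
  - intros Vp; apply Hext in Vp.
    destruct (IH Vp) as [N HN].
    exists N; intros n Hn; apply Hext; auto.
Qed.

Lemma not_generated_open_of_limit S q p U :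
  subbase_limit S q p -> U p -> (forall n, ~ U (q n)) -> ~ generated_open S U.
Proof.
  intros Hlim Up Hq HU.
  destruct (generated_open_limit S q p Hlim U HU Up) as [N HN].
  exact (Hq N (HN N (le_n N))).
Qed.

Definition lex_selection (phi : R -> R) (r s : R) : R :=
  if Rlt_dec (phi r) (phi s) then r
  else if Rlt_dec (phi s) (phi r) then s
  else if Rlt_dec r s then r else s.

Definition lex_lt (phi : R -> R) (x y : R) : Prop :=
  phi x < phi y \/ (phi x = phi y /\ x < y).

Lemma lex_selection_two_point phi : two_point_selection (lex_selection phi).
Proof.
  intros r s Hrs; unfold lex_selection.
  destruct (Rlt_dec (phi r) (phi s)), (Rlt_dec (phi s) (phi r)); try lra;
    try (split; auto; fail).
  destruct (Rlt_dec r s), (Rlt_dec s r); try lra; auto.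
Qed.

Lemma sel_lt_lex_selection phi x y : sel_lt (lex_selection phi) x y <-> lex_lt phi x y.
Proof.
  unfold sel_lt, lex_lt, lex_selection; split.
  - intros [Hne Hf].
    destruct (Rlt_dec (phi x) (phi y)); [lra|].
    destruct (Rlt_dec (phi y) (phi x)); [congruence|].
    destruct (Rlt_dec x y); [right; lra | congruence].
  - intros [H | [H1 H2]].
    + split; [intros ->; lra|].
      destruct (Rlt_dec (phi x) (phi y)); [auto | lra].
    + split; [lra|].
      destruct (Rlt_dec (phi x) (phi y)); [auto|].
      destruct (Rlt_dec (phi y) (phi x)); [lra|].
      destruct (Rlt_dec x y); [auto | lra].
Qed.

Lemma lex_selection_limit phi p a e q :
  phi p = a -> (forall x, phi x = a -> x = p) ->
  (forall n, 0 < e n) -> Un_cv e 0 -> (forall n, phi (q n) = a + e n) ->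
  subbase_limit (subbase_f (lex_selection phi)) q p.
Proof.
  intros Hp Huniq He_pos He_cv Hq U [r [HU | HU]] Up; apply HU in Up;
    unfold sel_left_ray, sel_right_ray in Up; rewrite sel_lt_lex_selection in Up.
  - assert (Har : a < phi r).
    { destruct Up as [H | [H1 H2]]; [lra|].
      rewrite (Huniq r) in H2; lra. }
    destruct (He_cv (phi r - a)) as [N HN]; [lra|].
    exists N; intros n Hn; apply HU, sel_lt_lex_selection; left.
    specialize (HN n Hn); unfold Rdist in HN.
    rewrite Rminus_0_r, Rabs_pos_eq in HN by (apply Rlt_le, He_pos).
    rewrite Hq; lra.
  - assert (Hra : phi r < a).
    { destruct Up as [H | [H1 H2]]; [lra|].
      rewrite (Huniq r) in H2; lra. }
    exists O; intros n _; apply HU, sel_lt_lex_selection; left.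
    rewrite Hq; specialize (He_pos n); lra.
Qed.

Definition seq_index (w : nat -> R) (x : R) : option nat :=
  match excluded_middle_informative (exists n, w n = x) with
  | left H => Some (proj1_sig (constructive_indefinite_description _ H))
  | right _ => None
  end.

Lemma seq_index_spec w x :
  match seq_index w x with
  | Some n => w n = x
  | None => forall n, w n <> x
  end.
Proof.
  unfold seq_index; destruct excluded_middle_informative as [H | H].
  - exact (proj2_sig (constructive_indefinite_description _ H)).
  - intros n E; apply H; now exists n.
Qed.

Lemma seq_index_at w n :
  (forall m k, w m = w k -> m = k) -> seq_index w (w n) = Some n.
Proof.
  intros w_inj; pose proof (seq_index_spec w (w n)) as Hs.
  destruct (seq_index w (w n)) as [m|].
  - now rewrite (w_inj m n Hs).
  - now destruct (Hs n).
Qed.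

Lemma seq_index_off w x : (forall n, w n <> x) -> seq_index w x = None.
Proof.
  intros Hx; pose proof (seq_index_spec w x) as Hs.
  destruct (seq_index w x) as [m|]; [now destruct (Hx m) | reflexivity].
Qed.

Lemma half_pow_bounds n : 0 < 1 / 2 ^ n <= 1.
Proof.
  assert (1 <= 2 ^ n) by (apply pow_R1_Rle; lra).
  split.
  - apply Rdiv_lt_0_compat; lra.
  - unfold Rdiv; rewrite Rmult_1_l, <- Rinv_1.
    apply Rinv_le_contravar; lra.
Qed.

Section CrossRank.

Variables u v : nat -> R.
Hypotheses (u_inj : forall m n, u m = u n -> m = n)
  (v_inj : forall m n, v m = v n -> m = n)
  (uv_disjoint : forall m n, u m <> v n).

(* The ranks of [v (S n)] decrease to that of [u 0], those of [u (S n)] to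
   that of [v 0]; both limit ranks are attained only once. *)
Definition cross_rank (x : R) : R :=
  match seq_index u x with
  | Some O => 0
  | Some (S n) => 3 + 1 / 2 ^ n
  | None =>
    match seq_index v x with
    | Some O => 3
    | Some (S n) => 1 / 2 ^ n
    | None => 5
    end
  end.

Lemma cross_rank_u n :
  cross_rank (u n) = match n with O => 0 | S k => 3 + 1 / 2 ^ k end.
Proof. unfold cross_rank; now rewrite seq_index_at. Qed.

Lemma cross_rank_v n :
  cross_rank (v n) = match n with O => 3 | S k => 1 / 2 ^ k end.
Proof.
  unfold cross_rank.
  rewrite seq_index_off by (intros m; apply uv_disjoint).
  now rewrite seq_index_at.
Qed.

Lemma cross_rank_cases x :
  cross_rank x = 0 /\ x = u O \/ cross_rank x = 3 /\ x = v O \/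
  0 < cross_rank x <= 1 \/ 3 < cross_rank x <= 4 \/ cross_rank x = 5.
Proof.
  unfold cross_rank.
  pose proof (seq_index_spec u x) as Hu; pose proof (seq_index_spec v x) as Hv.
  destruct (seq_index u x) as [[|n]|], (seq_index v x) as [[|m]|];
    try pose proof (half_pow_bounds n); try pose proof (half_pow_bounds m);
    intuition lra.
Qed.

Lemma cross_rank_eq_0 x : cross_rank x = 0 -> x = u O.
Proof. intros E; destruct (cross_rank_cases x) as [H|[H|[H|[H|H]]]]; lra. Qed.

Lemma cross_rank_eq_3 x : cross_rank x = 3 -> x = v O.
Proof. intros E; destruct (cross_rank_cases x) as [H|[H|[H|[H|H]]]]; lra. Qed.

Lemma cross_rank_limit_v :
  subbase_limit (subbase_f (lex_selection cross_rank)) (fun n => v (S n)) (u O).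
Proof.
  apply (lex_selection_limit _ _ 0 (fun n => 1 / 2 ^ n)).
  - exact (cross_rank_u O).
  - exact cross_rank_eq_0.
  - intros n; apply half_pow_bounds.
  - apply cv_pow_half.
  - intros n; rewrite cross_rank_v; lra.
Qed.

Lemma cross_rank_limit_u :
  subbase_limit (subbase_f (lex_selection cross_rank)) (fun n => u (S n)) (v O).
Proof.
  apply (lex_selection_limit _ _ 3 (fun n => 1 / 2 ^ n)).
  - exact (cross_rank_v O).
  - exact cross_rank_eq_3.
  - intros n; apply half_pow_bounds.
  - apply cv_pow_half.
  - intros n; apply cross_rank_u.
Qed.

End CrossRank.

Theorem theorem3p15 (C : R -> Prop) :
  infinite_set C ->
  has_card_continuum (fun x => ~ C x) ->
  exists f : R -> R -> R, two_point_selection f /\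
    ~ tau_open f C /\ ~ tau_closed f C.
Proof.
  intros [u [uC u_inj]] [h [hC [h_inj _]]].
  set (v n := h (INR n)).
  assert (v_inj : forall m n, v m = v n -> m = n)
    by (intros m n E; now apply INR_eq, h_inj).
  assert (uv_disjoint : forall m n, u m <> v n)
    by (intros m n E; apply (hC (INR n)); fold (v n); rewrite <- E; apply uC).
  exists (lex_selection (cross_rank u v)).
  split; [apply lex_selection_two_point | split].
  - apply (not_generated_open_of_limit _ _ _ C
      (cross_rank_limit_v u v u_inj v_inj uv_disjoint)); [apply uC | intros n; apply hC].
  - apply (not_generated_open_of_limit _ _ _ (fun x => ~ C x)
      (cross_rank_limit_u u v u_inj v_inj uv_disjoint)); [apply hC | intros n H; apply H, uC].
Qed.
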